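(* Let $R$ be an associative ring with identity and involution $*$, and let $a\in R^{\#}\cap R^{\dagger}$. Then $a\in R^{SEP}$ if and only if $a^{\dagger}a^2$ is a left $(a^{\dagger})^*$-idempotent, i.e. $(a^{\dagger}a^2)^2=(a^{\dagger})^*a^{\dagger}a^2$.
   Context: An involution on $R$ is a map $x\mapsto x^*$ with $(x^* )^*=x$, $(x+y)^*=x^*+y^*$, $(xy)^*=y^*x^*$. An element $a$ is Moore–Penrose invertible if there is $b$ with $aba=a$, $bab=b$, $(ab)^*=ab$, $(ba)^*=ba$; such $b$ is unique, denoted $a^{\dagger}$, and $R^{\dagger}$ is the set of such $a$. An element $a$ is group invertible if there is $b$ with $aba=a$, $bab=b$, $ab=ba$; such $b$ is unique, denoted $a^{\#}$, and $R^{\#}$ is the set of such $a$. For $a\in R^{\#}\cap R^{\dagger}$, $a$ is SEP if $a^*=a^{\dagger}=a^{\#}$; $R^{SEP}$ denotes the set of SEP elements. For $e,c\in R$, $e$ is a left $c$-idempotent if $e^2=ce$. *)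

From mathcomp Require Import all_boot all_algebra.
Set Implicit Arguments. Unset Strict Implicit. Unset Printing Implicit Defensive.
Import GRing.Theory.
Local Open Scope ring_scope.

(* An involution on a ring R (possibly trivial ring, hence pzRingType). *)
Definition involution (R : pzRingType) (s : R -> R) : Prop :=
  [/\ forall x, s (s x) = x,
      forall x y, s (x + y) = s x + s y &
      forall x y, s (x * y) = s y * s x].

Definition is_MP (R : pzRingType) (s : R -> R) (a b : R) : Prop :=
  [/\ a * b * a = a, b * a * b = b, s (a * b) = a * b & s (b * a) = b * a].

Definition is_group_inv (R : pzRingType) (a b : R) : Prop :=
  [/\ a * b * a = a, b * a * b = b & a * b = b * a].

Definition MP_invertible (R : pzRingType) (s : R -> R) (a : R) : Prop :=
  exists b, is_MP s a b.

Definition group_invertible (R : pzRingType) (a : R) : Prop :=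
  exists b, is_group_inv a b.

(* a is SEP: a in R^# ∩ R^† and a^* = a^† = a^#  (inverses are unique) *)
Definition SEP (R : pzRingType) (s : R -> R) (a : R) : Prop :=
  exists b c, [/\ is_MP s a b, is_group_inv a c, s a = b & b = c].

Definition left_c_idempotent (R : pzRingType) (c e : R) : Prop :=
  e * e = c * e.

From mathcomp Require Import all_boot all_algebra.
Set Implicit Arguments. Unset Strict Implicit. Unset Printing Implicit Defensive.
Import GRing.Theory.
Local Open Scope ring_scope.

(* Since (a^†)^* = a a^† (a^†)^* = (a^†)^* a^† a, the left idempotency of
   a^† a^2 amounts to a^† a^3 = (a^†)^* a; cancelling a^2 by (a^#)^2 gives
   a^† a = (a^†)^* a^#.  From this, a a^† a^† a = a^† a, hence a a^# = a^† a,
   and the hermitian a a^† = a^† a a a^† equals its adjoint a a^† a^† a = a^† a: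
   a is EP, so a^† = a^#, and then a = a a^† a = (a^†)^* a^† a = (a^†)^*. *)

Section GroupInverse.

Variables (R : pzRingType) (a c : R).
Hypothesis Gac : is_group_inv a c.

Lemma group_inv_sqrK X : X * a * a * c = X * a.
Proof.
by case: Gac => aca _ ac_ca; rewrite -!mulrA ac_ca (mulrA a) aca.
Qed.

Lemma group_inv_sqrKV X : X * a * c * c = X * c.
Proof. by case: Gac => _ cac ac_ca; rewrite -!mulrA (mulrA a) ac_ca cac. Qed.

Lemma group_inv_mulKr : c * a * a = a.
Proof. by case: Gac => aca _ ac_ca; rewrite -ac_ca aca. Qed.

Lemma group_inv_cancel_sqr X Y : X * a ^+ 3 = Y * a -> X * a = Y * c.
Proof.
rewrite !exprS expr0 mulr1 !mulrA => cubeE.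
by rewrite -group_inv_sqrK -group_inv_sqrK cubeE group_inv_sqrKV.
Qed.

End GroupInverse.

Section MoorePenrose.

Variables (R : pzRingType) (s : R -> R).
Hypothesis inv_s : involution s.

Let sK : involutive s. Proof. by case: inv_s. Qed.
Let sM x y : s (x * y) = s y * s x. Proof. by case: inv_s. Qed.

Lemma MP_inv_uniq a b b' : is_MP s a b -> is_MP s a b' -> b = b'.
Proof.
case=> aba bab s_ab s_ba [ab'a b'ab' s_ab' s_b'a].
have bE : b = b * s b * s a by rewrite -{1}bab -mulrA -s_ab sM mulrA.
have b'E : b' = s a * s b' * b' by rewrite -{1}b'ab' -{1}s_b'a sM.
have saE : s a = s a * a * b' by rewrite -{1}ab'a sM s_ab' mulrA.
have saE' : s a = b * a * s a by rewrite -{1}aba -mulrA sM s_ba.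
have -> : b = b * a * b' by rewrite {1}bE saE !mulrA -bE.
by rewrite {2}b'E saE' -!mulrA (mulrA (s a)) -b'E.
Qed.

Section MPInverse.

Variables a b : R.
Hypothesis MPab : is_MP s a b.

Lemma MP_adjoint_l : s b = a * b * s b.
Proof. by case: MPab => _ bab s_ab _; rewrite -{1}bab -mulrA sM s_ab. Qed.

Lemma MP_adjoint_r : s b = s b * b * a.
Proof. by case: MPab => _ bab _ s_ba; rewrite -{1}bab sM s_ba mulrA. Qed.

Lemma MP_sqr_left_idemE :
  left_c_idempotent (s b) (b * a ^+ 2) <-> b * a ^+ 3 = s b * a.
Proof.
case: MPab => aba _ _ _.
have abaK X : X * a * b * a = X * a by rewrite -!mulrA (mulrA a) aba.
by rewrite /left_c_idempotent !exprS expr0 !mulr1 !mulrA abaK -MP_adjoint_r.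
Qed.

Section GroupInvertible.

Variable c : R.
Hypothesis Gac : is_group_inv a c.
Hypothesis baE : b * a = s b * c.

Lemma MP_mulE_sqr : b * a = a * b * b * a.
Proof. by rewrite baE {1}MP_adjoint_l -mulrA -baE !mulrA. Qed.

Lemma MP_group_inv_mulE : a * c = b * a.
Proof.
case: MPab => aba _ _ _; case: Gac => _ _ ac_ca.
by rewrite ac_ca -{1}aba -mulrA MP_mulE_sqr !mulrA (group_inv_mulKr Gac).
Qed.

Lemma MP_commute : a * b = b * a.
Proof.
case: MPab => _ _ s_ab s_ba; case: Gac => aca _ _.
rewrite -s_ab -{1}aca MP_group_inv_mulE -mulrA sM s_ab s_ba mulrA.
by rewrite -MP_mulE_sqr.
Qed.

Lemma MP_eq_group_inv : b = c.
Proof.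
case: MPab => _ bab _ _; case: Gac => _ cac ac_ca.
rewrite -{1}bab -mulrA MP_commute -MP_group_inv_mulE mulrA -MP_group_inv_mulE.
by rewrite ac_ca cac.
Qed.

Lemma MP_adjoint_eq : s a = b.
Proof.
case: MPab => aba _ _ _.
have -> : a = s b.
  by rewrite -{1}aba MP_commute baE -MP_eq_group_inv -MP_adjoint_r.
by rewrite sK.
Qed.

End GroupInvertible.

End MPInverse.

Lemma SEP_MP_cube a b : is_MP s a b -> SEP s a -> b * a ^+ 3 = s b * a.
Proof.
move=> MPab [b' [c [MPab' Gac sa_b' b'c]]].
have b'b : b' = b := MP_inv_uniq MPab' MPab.
have sb : s b = a by rewrite -b'b -sa_b' sK.
by rewrite sb -b'b b'c !exprS expr0 mulr1 !mulrA (group_inv_mulKr Gac).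
Qed.

Lemma MP_cube_SEP a b c : is_MP s a b -> is_group_inv a c ->
  b * a ^+ 3 = s b * a -> SEP s a.
Proof.
move=> MPab Gac /(group_inv_cancel_sqr Gac) baE.
exists b, c; split=> //.
  exact: MP_adjoint_eq baE.
exact: MP_eq_group_inv baE.
Qed.

End MoorePenrose.

Theorem theorem3p6 (R : pzRingType) (s : R -> R) (a b : R) :
  involution s ->
  group_invertible a ->
  is_MP s a b ->
  (SEP s a <-> left_c_idempotent (s b) (b * a ^+ 2)).
Proof.
move=> inv_s [c Gac] MPab.
apply: iff_trans (iff_sym (MP_sqr_left_idemE inv_s MPab)).
by split; [exact: SEP_MP_cube | exact: MP_cube_SEP Gac].
Qed.
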